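(* Consider a nonempty configuration with largest nonempty level $\lambda$, and let $G,G'$ be integers with $A(G)<2^b$ and $A(G')<2^b$. Then every level $\ell$ with $A_\ell(G)\ne A_\ell(G')$ lies in the integer interval $[\theta(H,z),\lambda]$, where $H=\max\{G,G'\}$ and $\theta(H,z)=-b-H-\lfloor\log_2z\rfloor$, and this interval contains at most $2b$ integers. In particular, at most $2b$ levels satisfy $A_\ell(G)\neq A_\ell(G')$.
   Context: Fix an integer $b\ge 2$. There is a set $\mathcal L$ of $N$ levels, which are consecutive integers. Each level $\ell$ holds a finite (possibly empty) multiset of normalized significands, each an integer in $[2^{b-1},2^b)$. Let $z$ be the total number of stored significands over all levels; assume $z<2^b$. For each level, $SS_\ell$ is the sum of its significands (so $SS_\ell=0$ iff the level is empty); set $SS_\ell=0$ for integers $\ell\notin\mathcal L$. The level weight is $W_\ell=SS_\ell2^\ell$. For an integer global shift $G$, $A_\ell(G)=\lfloor W_\ell2^G\rfloor+1$ if $SS_\ell>0$ and $A_\ell(G)=0$ if $SS_\ell=0$; $A(G)=\sum_\ell A_\ell(G)$. The configuration is nonempty if $z\ge1$. *)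

From HB Require Import structures.
From mathcomp Require Import all_boot all_order all_algebra.
Set Implicit Arguments. Unset Strict Implicit. Unset Printing Implicit Defensive.
Import Order.TTheory GRing.Theory Num.Theory.
Local Open Scope ring_scope.

(* A configuration: the level set is L = {lo, lo+1, ..., lo+N-1} (N consecutive
   integers); S l is the multiset (as a list) of significands stored at level l.
   Levels outside L are required (by hypothesis in the theorem) to be empty. *)

Definition SS (S : int -> seq nat) (l : int) : nat := sumn (S l).

Definition Alev (S : int -> seq nat) (l G : int) : int :=
  if (SS S l == 0)%N then 0
  else Num.floor ((SS S l)%:R * (2%:R : rat) ^ l * (2%:R : rat) ^ G) + 1.

Definition Atot (lo : int) (N : nat) (S : int -> seq nat) (G : int) : int :=
  \sum_(i < N) Alev S (lo + (i : nat)%:Z) G.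

Definition zcount (lo : int) (N : nat) (S : int -> seq nat) : nat :=
  \sum_(i < N) size (S (lo + (i : nat)%:Z)%R).

Definition theta (b : nat) (H : int) (z : nat) : int :=
  - (b%:Z) - H - (trunc_log 2 z)%:Z.

From HB Require Import structures.
From mathcomp Require Import all_boot all_order all_algebra.
From mathcomp Require Import zify.

Set Implicit Arguments.
Unset Strict Implicit.
Unset Printing Implicit Defensive.
Import Order.TTheory GRing.Theory Num.Theory.
Local Open Scope ring_scope.

(* A nonempty level has SS_l >= 2^(b-1) and SS_l < z 2^b < 2^(b + floor(log2 z) + 1).
   Below theta(H, z) every weight W_l 2^G, G <= H, is therefore < 1, so A_l(G) and
   A_l(G') both equal [SS_l > 0].  Above, 0 < lam + H would give W_lam 2^H >= 2^b, contradicting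
   A(H) < 2^b; hence lam <= -H and the interval [theta, lam] has at most
   b + floor(log2 z) + 1 <= 2b elements. *)

Lemma sumn_lt_size_mul (s : seq nat) (M : nat) :
  (forall x, x \in s -> (x < M)%N) -> s != [::] -> (sumn s < size s * M)%N.
Proof.
elim: s => // x s IH ltM _ /=; rewrite mulSn.
have ltxM : (x < M)%N by apply: ltM; rewrite mem_head.
case: s IH ltM => [|y s] IH ltM; first by rewrite addn0 mul0n addn0.
rewrite -addSn leq_add // ltnW // IH // => t ts.
by apply: ltM; rewrite in_cons ts orbT.
Qed.

Lemma trunc_log_lt (p n m : nat) :
  (1 < p)%N -> (0 < n)%N -> (n < p ^ m)%N -> (trunc_log p n < m)%N.
Proof.
move=> p_gt1 n_gt0 n_lt; rewrite -(ltn_exp2l _ _ p_gt1).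
exact: leq_ltn_trans (trunc_logP p_gt1 n_gt0) n_lt.
Qed.

Lemma card_shifted_ord_le (N n : nat) (lo a : int) (A : {set 'I_N}) :
  (forall i, i \in A -> a <= lo + (i : nat)%:Z < a + n%:Z) -> (#|A| <= n)%N.
Proof.
move=> inA; pose f (i : 'I_N) := absz (lo + (i : nat)%:Z - a)%R.
rewrite cardE -(size_map f) -(size_iota 0 n) uniq_leq_size //.
  rewrite map_inj_in_uniq ?enum_uniq // => i j.
  rewrite !mem_enum => /inA ? /inA ?; rewrite /f => fij; apply: val_inj => /=; lia.
move=> _ /mapP [i + ->]; rewrite mem_enum mem_iota => /inA ?; rewrite /f; lia.
Qed.

Lemma ord_shift_of_range (lo : int) (N : nat) (l : int) :
  lo <= l < lo + N%:Z -> exists i : 'I_N, lo + (i : nat)%:Z = l.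
Proof.
move=> /andP [lo_le l_lt]; have ltN : (absz (l - lo) < N)%N by lia.
by exists (Ordinal ltN) => /=; lia.
Qed.

Lemma pow2_le (e f : int) : e <= f -> (2%:R : rat) ^ e <= 2%:R ^ f.
Proof.
move=> le_ef; rewrite -(subrK e f) expfzDr // ler_peMl ?exprz_ge0 //.
have : 0 <= f - e by rewrite subr_ge0.
by case: (f - e) => // k _; rewrite -exprnP exprn_ege1.
Qed.

Lemma floor_mul_pow2_small (m n : nat) (e : int) :
  (m < 2 ^ n)%N -> e <= - n%:Z -> Num.floor (m%:R * (2%:R : rat) ^ e) = 0.
Proof.
move=> m_lt e_le; apply/eqP; rewrite floor_eq add0r mulr_ge0 ?exprz_ge0 //=.
apply: (le_lt_trans (y := m%:R * 2%:R ^ (- n%:Z))); first by rewrite ler_wpM2l ?pow2_le.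
rewrite -exprnN exprnP -exprnP.
by rewrite -[1%:~R]/1 ltr_pdivrMr ?exprn_gt0 // mul1r -natrX ltr_nat.
Qed.

Lemma floor_mul_pow2_large (m : nat) (e : int) :
  0 < e -> (2 * m)%:Z <= Num.floor (m%:R * (2%:R : rat) ^ e).
Proof.
move=> e_gt0; rewrite floor_ge_int PoszM intrM mulrC ler_wpM2l //.
by rewrite -[2%:~R]expr1z pow2_le.
Qed.

Lemma AlevE (S : int -> seq nat) (l G : int) :
  Alev S l G =
  if (SS S l == 0)%N then 0 else Num.floor ((SS S l)%:R * (2%:R : rat) ^ (l + G)) + 1.
Proof. by rewrite /Alev expfzDr ?mulrA. Qed.

Lemma Alev_nil (S : int -> seq nat) (l G : int) : S l = [::] -> Alev S l G = 0.
Proof. by rewrite /Alev /SS => ->. Qed.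

Lemma Alev_ge0 (S : int -> seq nat) (l G : int) : 0 <= Alev S l G.
Proof.
by rewrite /Alev; case: eqP => // _; rewrite addr_ge0 // floor_ge0 !mulr_ge0 ?exprz_ge0.
Qed.

Lemma Alev_small_shift (S : int -> seq nat) (n : nat) (l G G' : int) :
  (SS S l < 2 ^ n)%N -> l + G <= - n%:Z -> l + G' <= - n%:Z ->
  Alev S l G = Alev S l G'.
Proof. by move=> SS_lt le_G le_G'; rewrite !AlevE !(floor_mul_pow2_small SS_lt). Qed.

Lemma Alev_large_shift (S : int -> seq nat) (m : nat) (l G : int) :
  (0 < m)%N -> (m <= SS S l)%N -> 0 < l + G -> (2 * m)%:Z < Alev S l G.
Proof.
move=> m_gt0 m_le lG_gt0; rewrite AlevE ifF; last by apply/negbTE; rewrite -lt0n; lia.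
rewrite ltzD1 (le_trans _ (floor_mul_pow2_large _ lG_gt0)) // lez_nat; lia.
Qed.

Lemma Alev_le_Atot (lo : int) (N : nat) (S : int -> seq nat) (i : 'I_N) (G : int) :
  Alev S (lo + (i : nat)%:Z) G <= Atot lo N S G.
Proof. by rewrite /Atot (bigD1 i) //= lerDl sumr_ge0 // => j _; apply: Alev_ge0. Qed.

Section Configuration.

Variables (b : nat) (lo : int) (N : nat) (S : int -> seq nat).
Hypothesis supp : forall l : int, S l != [::] -> lo <= l < lo + N%:Z.
Hypothesis normal : forall (l : int) (x : nat), x \in S l -> (2 ^ b.-1 <= x < 2 ^ b)%N.

Lemma size_le_zcount (l : int) : S l != [::] -> (size (S l) <= zcount lo N S)%N.
Proof.
move=> /supp /ord_shift_of_range [i <-].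
by rewrite /zcount (bigD1 i) //= leq_addr.
Qed.

Lemma SS_ge (l : int) : S l != [::] -> (2 ^ b.-1 <= SS S l)%N.
Proof.
rewrite /SS; case: (S l) (@normal l) => // x s x_normal _.
have /andP [le_x _] := x_normal x (mem_head x s).
by apply: leq_trans le_x (leq_addr _ _).
Qed.

Lemma SS_lt_pow (l : int) :
  (SS S l < 2 ^ (b + (trunc_log 2 (zcount lo N S)).+1))%N.
Proof.
rewrite /SS; have [-> | Sl_nil] := eqVneq (S l) [::]; first exact: expn_gt0.
apply: (leq_trans (sumn_lt_size_mul (fun x xS => proj2 (andP (normal xS))) Sl_nil)).
rewrite expnD mulnC leq_pmul2l ?expn_gt0 //.
exact: leq_trans (size_le_zcount Sl_nil) (ltnW (trunc_log_ltn _ _)).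
Qed.

End Configuration.

Theorem mainTheorem12 (b : nat) (lo : int) (N : nat) (S : int -> seq nat)
    (lam G G' : int) :
  (2 <= b)%N ->
  (forall l : int, S l != [::] -> lo <= l < lo + N%:Z) ->
  (forall (l : int) (x : nat), x \in S l -> (2 ^ b.-1 <= x < 2 ^ b)%N) ->
  (zcount lo N S < 2 ^ b)%N ->
  (1 <= zcount lo N S)%N ->
  S lam != [::] ->
  (forall l : int, S l != [::] -> l <= lam) ->
  Atot lo N S G < (2 ^ b)%:Z ->
  Atot lo N S G' < (2 ^ b)%:Z ->
  [/\ (forall l : int, Alev S l G != Alev S l G' ->
          theta b (Order.max G G') (zcount lo N S) <= l <= lam),
      lam + 1 - theta b (Order.max G G') (zcount lo N S) <= (2 * b)%:Z
    & (#|[set i : 'I_N | Alev S (lo + (i : nat)%:Z) G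
                          != Alev S (lo + (i : nat)%:Z) G']| <= 2 * b)%N].
Proof.
move=> b_ge2 supp normal z_lt z_gt0 lam_nil lam_max AG_lt AG'_lt.
set z := zcount lo N S; set H := Order.max G G'; set k := trunc_log 2 z.
have k_lt : (k < b)%N by apply: trunc_log_lt.
have AH_lt : Atot lo N S H < (2 ^ b)%:Z by rewrite /H maxEle; case: ifP.
have lamH_le0 : lam + H <= 0.
  rewrite leNgt; apply/negP => lamH_gt0.
  have [i i_lam] := ord_shift_of_range (supp _ lam_nil).
  have := Alev_large_shift (expn_gt0 2 b.-1) (SS_ge normal lam_nil) lamH_gt0.
  rewrite -expnS prednK ?(leq_trans _ b_ge2) // => large.
  have := Alev_le_Atot lo S i H; rewrite i_lam => /(lt_le_trans large).
  by rewrite ltNge ltW.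
have diff_in : forall l, Alev S l G != Alev S l G' -> theta b H z <= l <= lam.
  move=> l; have [Sl_nil | Sl] := eqVneq (S l) [::]; first by rewrite !Alev_nil.
  move=> Adiff; rewrite lam_max // andbT leNgt; apply: contra Adiff => l_lt.
  have le_H : l + H <= - (b + k.+1)%N%:Z by move: l_lt; rewrite /theta -/k; lia.
  have [le_G le_G'] : G <= H /\ G' <= H by rewrite /H !le_max !lexx orbT.
  have := SS_lt_pow supp normal l; rewrite -/z -/k => SS_lt.
  by apply/eqP; apply: (Alev_small_shift SS_lt); lia.
have len_le : lam + 1 - theta b H z <= (2 * b)%:Z by rewrite /theta -/k; lia.
split=> //; apply: (card_shifted_ord_le (lo := lo) (a := theta b H z)) => i.
by rewrite inE => /diff_in; lia.
Qed.
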